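(* Let $G$ be a vigorous subgroup of $\operatorname{Homeo}(\mathfrak{C})$. Let $A\in K_{\mathfrak{C}}$ and let $C,D$ be clopen subsets of $\mathfrak{C}$ such that $A$, $C$, $D$ are pairwise disjoint and $A\cup C\cup D\neq\mathfrak{C}$. Then $$\operatorname{pstab}_G(A)=\langle \operatorname{pstab}_G(A\cup C)\cup \operatorname{pstab}_G(A\cup D)\rangle.$$
   Context: $\mathfrak{C}$ denotes a Cantor space (a space homeomorphic to $\{0,1\}^\omega$). Groups of homeomorphisms act on the right. $K_{\mathfrak{C}}$ denotes the set of non-empty proper clopen subsets of $\mathfrak{C}$. For $\gamma\in\operatorname{Homeo}(\mathfrak{C})$, $\operatorname{supp}(\gamma)=\{p\in\mathfrak{C}: p\gamma\neq p\}$. For $G\le\operatorname{Homeo}(\mathfrak{C})$ and $A\subseteq\mathfrak{C}$, $\operatorname{pstab}_G(A)=\{g\in G: pg=p \text{ for all } p\in A\}$. A subset $S\subseteq \operatorname{Homeo}(\mathfrak{C})$ is vigorous if for all clopen $A,B,C\subseteq\mathfrak{C}$ with $B,C$ non-empty proper subsets of $A$ there is $\gamma\in S$ with $\operatorname{supp}(\gamma)\subseteq A$ and $B\gamma\subseteq C$. *)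

(* the Cantor space is the library's [cantor_space]
   (bool^nat with the product topology). *)
From HB Require Import structures.
From mathcomp Require Import all_boot all_order all_algebra.
From mathcomp Require Import all_classical all_reals topology cantor.
Set Implicit Arguments. Unset Strict Implicit. Unset Printing Implicit Defensive.
Local Open Scope classical_set_scope.

Notation CS := cantor_space.

Definition is_homeo (f : CS -> CS) : Prop :=
  continuous f /\ exists g : CS -> CS, [/\ cancel f g, cancel g f & continuous g].

Definition is_homeo_subgroup (H : set (CS -> CS)) : Prop :=
  [/\ (forall f, H f -> is_homeo f),
      H id,
      (forall f g, H f -> H g -> H (g \o f)) &
      (forall f g, H f -> cancel f g -> cancel g f -> H g)].

Definition gen_subgroup (S : set (CS -> CS)) : set (CS -> CS) :=
  fun f => forall H, is_homeo_subgroup H -> S `<=` H -> H f.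

Definition supp (g : CS -> CS) : set CS := [set p | g p <> p].

Definition pstab (G : set (CS -> CS)) (A : set CS) : set (CS -> CS) :=
  [set g | G g /\ forall p, A p -> g p = p].

Definition KC (A : set CS) : Prop := clopen A /\ A !=set0 /\ A <> setT.

Definition vigorous (S : set (CS -> CS)) : Prop :=
  forall A B C : set CS, clopen A -> clopen B -> clopen C ->
    B !=set0 -> B `<=` A -> B <> A ->
    C !=set0 -> C `<=` A -> C <> A ->
    exists2 g, S g & supp g `<=` A /\ g @` B `<=` C.

From mathcomp Require Import all_boot all_order all_algebra.
From mathcomp Require Import all_classical all_reals topology cantor.
Local Open Scope classical_set_scope.

(* pstab_G(A) is a subgroup containing both generating sets, which gives one
   inclusion.  Conversely let g fix A and let H be a subgroup containing both
   stabilisers; we may assume C, D nonempty.  Pick x outside A u C u D.  As g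
   is injective, x misses g(C) or g(D); by symmetry say g(C).  Then:
   - [clopen_split_outside]: there is a nonempty clopen X outside A u C u D
     and a point y outside A u C u D u X;
   - [normalise_image]: some d in pstab(A u C) sends g(C) \ C into X, so
     g1 := d o g fixes A and maps C into C u X, and g = d^-1 o g1;
   - [absorb]: some u in G supported off C u X sends A u D into A, and by
     [conjugation_factor] s := u^-1 g1 u lies in pstab(A u D), agrees with g1
     on C, hence g1 = s o (s^-1 g1) with s^-1 g1 in pstab(A u C).
   The maps d and u are both provided by vigour. *)

Lemma disjoint_points {E F : set CS} {p : CS} : E `&` F = set0 -> E p -> F p -> False.
Proof. by move=> /disjoints_subset EF /EF. Qed.

Lemma supp_fix {f : CS -> CS} {Z : set CS} {p : CS} : supp f `<=` Z -> ~ Z p -> f p = p.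
Proof. by move=> sfZ; apply: contra_notP => /sfZ. Qed.

Lemma cancel_fix {f g : CS -> CS} {p : CS} : cancel f g -> f p = p -> g p = p.
Proof. by move=> fK fp; rewrite -{1}fp fK. Qed.

Section HomeoSubgroup.
Context {H : set (CS -> CS)} (H_subgroup : is_homeo_subgroup H).

Lemma subgroup_comp {f g : CS -> CS} : H f -> H g -> H (g \o f).
Proof. by case: H_subgroup => _ _ + _; apply. Qed.

Lemma subgroup_inv {f : CS -> CS} :
  H f -> exists2 fi, H fi & [/\ cancel f fi, cancel fi f & continuous fi].
Proof.
case: H_subgroup => homeo _ _ inv Hf.
have [_ [fi [fK fiK fi_cont]]] := homeo f Hf.
by exists fi => //; exact: inv Hf fK fiK.
Qed.

Lemma pstab_subgroup (A : set CS) : is_homeo_subgroup (pstab H A).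
Proof.
case: H_subgroup => homeo Hid Hcomp Hinv; split.
- by move=> f [Hf _]; exact: homeo.
- by [].
- by move=> f g [Hf fA] [Hg gA]; split; [exact: Hcomp | move=> p Ap /=; rewrite fA // gA].
- move=> f g [Hf fA] fK gK; split; first exact: Hinv Hf fK gK.
  by move=> p Ap; apply: cancel_fix fK (fA p Ap).
Qed.

End HomeoSubgroup.

Section Vigorous.
Context {G : set (CS -> CS)} (G_subgroup : is_homeo_subgroup G)
  (G_vigorous : vigorous G).

(* Outside two disjoint nonempty clopens, every nonempty clopen Y contains a
   nonempty clopen X missing some point of Y: push C u D into Y and take the
   image of C. *)
Lemma clopen_split_outside {C D Y : set CS} :
  clopen C -> clopen D -> clopen Y -> C !=set0 -> D !=set0 -> Y !=set0 ->
  C `&` D = set0 -> (C `|` D) `&` Y = set0 ->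
  exists X : set CS, [/\ clopen X, X !=set0, X `<=` Y & exists2 y, Y y & ~ X y].
Proof.
move=> clC clD clY [c Cc] [d Dd] [y0 Yy0] CD CDY.
have [u Gu [_ uCD]] : exists2 u, G u & supp u `<=` setT /\ u @` (C `|` D) `<=` Y.
  apply: G_vigorous => //; first exact: clopenT.
  - exact: clopenU.
  - by exists c; left.
  - by move=> CDT; apply: (disjoint_points CDY _ Yy0); rewrite CDT.
  - by exists y0.
  - by move=> YT; apply: (disjoint_points CDY (or_introl Cc)); rewrite YT.
have [ui _ [uK uiK ui_cont]] := subgroup_inv G_subgroup Gu.
exists (ui @^-1` C); split.
- exact: preimage_clopen.
- by exists (u c); rewrite /= uK.
- by move=> p Cuip; rewrite -(uiK p); apply: uCD; exists (ui p) => //; left.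
- exists (u d); first by apply: uCD; exists d => //; right.
  by rewrite /preimage /= uK => Cd; apply: disjoint_points CD Cd Dd.
Qed.

Lemma push_within (R B T : set CS) :
  clopen R -> clopen B -> clopen T -> B `<=` R -> B <> R ->
  T !=set0 -> T `<=` R -> T <> R ->
  exists2 d, G d & supp d `<=` R /\ d @` B `<=` T.
Proof.
move=> clR clB clT BR BnR neT TR TnR.
have [->|/set0P neB] := eqVneq B set0; last exact: G_vigorous.
exists id; first by case: G_subgroup.
by split=> [p|]; rewrite ?image_set0.
Qed.

Lemma conjugation_factor {H : set (CS -> CS)} {A C D : set CS} {g1 u : CS -> CS} :
  is_homeo_subgroup H -> pstab G (A `|` C) `<=` H -> pstab G (A `|` D) `<=` H ->
  pstab G A g1 -> G u -> u @` (A `|` D) `<=` A ->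
  (forall c, C c -> u c = c /\ u (g1 c) = g1 c) -> H g1.
Proof.
move=> H_subgroup sC sD [Gg1 g1A] Gu uAD uC.
have [ui Gui [uK uiK _]] := subgroup_inv G_subgroup Gu.
pose s := ui \o g1 \o u.
have s_stab : pstab G (A `|` D) s.
  split; first by apply: subgroup_comp => //; apply: subgroup_comp.
  move=> p ADp; have Aup : A (u p) by apply: uAD; exists p.
  by rewrite /s /= g1A // uK.
have sg1 : forall c, C c -> s c = g1 c.
  move=> c Cc; have [uc ug1c] := uC c Cc.
  by rewrite /s /= uc (cancel_fix uK ug1c).
have [si Gsi [sK siK _]] := subgroup_inv G_subgroup (s_stab.1).
have rest : H (si \o g1).
  apply: sC; split; first exact: subgroup_comp.
  move=> p [Ap|Cp] /=; last by rewrite -sg1 // sK.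
  by rewrite g1A //; apply: cancel_fix sK _; apply: s_stab.2; left.
have -> : g1 = s \o (si \o g1) by apply: funext => p /=; rewrite siK.
by apply: subgroup_comp => //; apply: sD.
Qed.

(* Vigour yields u supported off C u X pushing A u D into A, and then
   [conjugation_factor] applies. *)
Lemma absorb {H : set (CS -> CS)} {A C D X : set CS} {g1 : CS -> CS} {y : CS} :
  is_homeo_subgroup H -> pstab G (A `|` C) `<=` H -> pstab G (A `|` D) `<=` H ->
  clopen A -> clopen C -> clopen D -> clopen X -> A !=set0 ->
  A `&` C = set0 -> A `&` X = set0 -> D `&` C = set0 -> D `&` X = set0 ->
  ~ A y -> ~ C y -> ~ D y -> ~ X y ->
  pstab G A g1 -> (forall c, C c -> C (g1 c) \/ X (g1 c)) -> H g1.
Proof.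
move=> H_subgroup sC sD clA clC clD clX [a Aa] AC AX DC DX nAy nCy nDy nXy g1A g1C.
pose Z := ~` (C `|` X).
have Zy : Z y by move=> [/nCy|/nXy].
have ADZ : A `|` D `<=` Z.
  move=> p [Ap|Dp] [Cp|Xp].
  - exact: disjoint_points AC Ap Cp.
  - exact: disjoint_points AX Ap Xp.
  - exact: disjoint_points DC Dp Cp.
  - exact: disjoint_points DX Dp Xp.
have [u Gu [suppu uAD]] : exists2 u, G u & supp u `<=` Z /\ u @` (A `|` D) `<=` A.
  apply: G_vigorous => //.
  - by apply: clopenC set0 _; exact: clopenU.
  - exact: clopenU.
  - by exists a; left.
  - by move=> ADZe; move: Zy; rewrite -ADZe => -[/nAy|/nDy].
  - by exists a.
  - by move=> p Ap; apply: ADZ; left.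
  - by move=> AZ; move: Zy; rewrite -AZ.
apply: (conjugation_factor H_subgroup sC sD g1A Gu uAD) => c Cc.
have uCX : forall p, (C `|` X) p -> u p = p.
  by move=> p CXp; apply: supp_fix suppu _ => /(_ CXp).
by split; apply: uCX; [left | case: (g1C c Cc) => ?; [left|right]].
Qed.

(* Vigour applies inside R := ~(A u C) to B := R n g(C), which is proper in R
   thanks to a point x outside A u C u g(C); X is proper in R thanks to y. *)
Lemma normalise_image {A C X : set CS} {g : CS -> CS} {x y : CS} :
  clopen A -> clopen C -> clopen X -> X !=set0 -> A `&` C = set0 ->
  X `<=` ~` (A `|` C) -> ~ (A `|` C) y -> ~ X y ->
  ~ (A `|` C) x -> ~ (g @` C) x -> pstab G A g ->
  exists2 d, pstab G (A `|` C) d & forall c, C c -> C (d (g c)) \/ X (d (g c)).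
Proof.
move=> clA clC clX neX AC XR nACy nXy nACx ngCx [Gg gA].
pose R := ~` (A `|` C).
have [gi _ [gK giK gi_cont]] := subgroup_inv G_subgroup Gg.
have [d Gd [suppd dB]] : exists2 d, G d &
    supp d `<=` R /\ d @` (R `&` (gi @^-1` C)) `<=` X.
  apply: push_within => //.
  - by apply: clopenC set0 _; exact: clopenU.
  - by apply: clopenI; [apply: clopenC set0 _; exact: clopenU | exact: preimage_clopen].
  - move=> BR; have [_ /= Cgix] : (R `&` (gi @^-1` C)) x by rewrite BR.
    by apply: ngCx; exists (gi x) => //; rewrite giK.
  - by move=> XRe; apply: nXy; rewrite XRe.
have dAC : forall p, (A `|` C) p -> d p = p.
  by move=> p ACp; apply: supp_fix suppd _ => /(_ ACp).
exists d => // c Cc; have [Cgc|nCgc] := pselect (C (g c)).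
  by left; rewrite dAC //; right.
right; apply: dB; exists (g c) => //; split; last by rewrite /= gK.
case=> // Agc; have gc : g c = c by apply: (can_inj gK); exact: gA.
by move: Agc; rewrite gc => /(disjoint_points AC); apply.
Qed.

(* The main case: some point x lies outside A u C u D and outside g(C).
   Then g = d^-1 o (d o g) with d from [normalise_image], where d^-1 fixes
   A u C and d o g is handled by [absorb]. *)
Lemma pstab_in_generated {H : set (CS -> CS)} {A C D : set CS} {g : CS -> CS} {x : CS} :
  is_homeo_subgroup H -> pstab G (A `|` C) `<=` H -> pstab G (A `|` D) `<=` H ->
  clopen A -> clopen C -> clopen D -> A !=set0 -> C !=set0 -> D !=set0 ->
  A `&` C = set0 -> C `&` D = set0 ->
  ~ A x -> ~ C x -> ~ D x -> ~ (g @` C) x -> pstab G A g -> H g.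
Proof.
move=> H_subgroup sC sD clA clC clD neA neC neD AC CD nAx nCx nDx ngCx [Gg gA].
have outside : forall E p, E `<=` A `|` C `|` D -> ~ (A `|` C `|` D) p -> ~ E p.
  by move=> E p sE nACDp /sE.
have [X [clX neX XY [y Yy nXy]]] : exists X : set CS,
    [/\ clopen X, X !=set0, X `<=` ~` (A `|` C `|` D) &
         exists2 y, ~ (A `|` C `|` D) y & ~ X y].
  apply: (clopen_split_outside clC clD) => //.
  - by apply: clopenC set0 _; apply: clopenU => //; exact: clopenU.
  - by exists x => -[[]|].
  - by rewrite disjoints_subset => p CDp; apply; case: CDp; [left; right | right].
have XAC : X `<=` ~` (A `|` C) by move=> p /XY; apply: outside => q ?; left.
have nACx : ~ (A `|` C) x by move=> [/nAx|/nCx].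
have nACy : ~ (A `|` C) y by apply: outside Yy => q ?; left.
have [d [Gd dAC] g1C] := normalise_image clA clC clX neX AC XAC nACy nXy nACx ngCx (conj Gg gA).
have [di Gdi [dK _ _]] := subgroup_inv G_subgroup Gd.
have Hdi : H di by apply: sC; split=> // p /dAC; exact: cancel_fix dK.
have Hg1 : H (d \o g).
  apply: (absorb (g1 := d \o g) H_subgroup sC sD clA clC clD clX neA AC _ _ _ _ _ _ nXy _ g1C).
  - by rewrite disjoints_subset => p Ap /XY; apply; left; left.
  - by rewrite setIC.
  - by rewrite disjoints_subset => p Dp /XY; apply; right.
  - by apply: outside Yy => p Ap; left; left.
  - by apply: outside Yy => p Cp; left; right.
  - by apply: outside Yy => p Dp; right.
  - by split=> [|p Ap /=]; [exact: subgroup_comp | rewrite gA // dAC //; left].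
have -> : g = di \o (d \o g) by apply: funext => p /=; rewrite dK.
exact: subgroup_comp.
Qed.

End Vigorous.

Theorem lemma2p9 (G : set (cantor_space -> cantor_space))
  (A C D : set cantor_space) :
  is_homeo_subgroup G -> vigorous G ->
  KC A -> clopen C -> clopen D ->
  A `&` C = set0 -> A `&` D = set0 -> C `&` D = set0 ->
  A `|` C `|` D <> setT ->
  pstab G A = gen_subgroup (pstab G (A `|` C) `|` pstab G (A `|` D)).
Proof.
move=> G_subgroup G_vigorous [clA [neA _]] clC clD AC AD CD /eqP /setTPn [x nACDx].
have [nAx nCx nDx] : [/\ ~ A x, ~ C x & ~ D x].
  by split=> ?; apply: nACDx; [left; left | left; right | right].
rewrite eqEsubset; split; last first.
  move=> g gen_g; apply: gen_g; first exact: pstab_subgroup.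
  by move=> f [] [Gf fA]; split=> // p Ap; apply: fA; left.
move=> g g_stab H H_subgroup sCD.
have sC : pstab G (A `|` C) `<=` H by move=> f ?; apply: sCD; left.
have sD : pstab G (A `|` D) `<=` H by move=> f ?; apply: sCD; right.
have [C0|/set0P neC] := eqVneq C set0; first by apply: sC; rewrite C0 setU0.
have [D0|/set0P neD] := eqVneq D set0; first by apply: sD; rewrite D0 setU0.
have [gCx|ngCx] := pselect ((g @` C) x); last first.
  exact: (pstab_in_generated (x:=x) G_subgroup G_vigorous H_subgroup sC sD).
(* x = g c is in g(C), hence not in g(D): g is injective and C, D are disjoint *)
have ngDx : ~ (g @` D) x.
  have [gi _ [gK _ _]] := subgroup_inv G_subgroup g_stab.1.
  case: gCx => c Cc <- [d Dd /(can_inj gK) dc].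
  by move: Cc; rewrite -dc => /(disjoint_points CD); apply.
by apply: (pstab_in_generated (x:=x) G_subgroup G_vigorous H_subgroup sD sC); rewrite // setIC.
Qed.
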